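(* Let $R$ be a commutative ring with identity. Then $R$ is semi-complemented if and only if its classical ring of quotients $q(R)$ is semi-complemented.
   Context: $\mathfrak{N}(R)$ is the nilradical and $\mathrm{reg}(R)$ the set of regular elements (non-zero-divisors); $q(R)$ is the localization of $R$ at $\mathrm{reg}(R)$. An element $a$ is complemented if there is $b$ with $ab=0$ and $a+b\in\mathrm{reg}(R)$. $R$ is semi-complemented if every element of $R\setminus\mathfrak{N}(R)$ is complemented. *)

From mathcomp Require Import all_boot all_algebra.
Set Implicit Arguments. Unset Strict Implicit. Unset Printing Implicit Defensive.
Import GRing.Theory.
Local Open Scope ring_scope.

Definition in_nilradical (R : comPzRingType) (a : R) : Prop :=
  exists n : nat, a ^+ n = 0.

Definition regular (R : comPzRingType) (a : R) : Prop :=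
  forall b : R, a * b = 0 -> b = 0.

Definition complemented (R : comPzRingType) (a : R) : Prop :=
  exists b : R, a * b = 0 /\ regular (a + b).

Definition semi_complemented (R : comPzRingType) : Prop :=
  forall a : R, ~ in_nilradical a -> complemented a.

(* f : R -> Q presents Q as the classical ring of quotients q(R) = R[reg(R)^-1]
   (standard characterization of the localization at S = reg(R):
   f(S) consists of units, ker f = {a | sa = 0 for some s in S} = 0,
   and every element of Q is of the form f(a) f(s)^-1 with s in S). *)
Definition is_classical_quotient (R Q : comPzRingType) (f : {rmorphism R -> Q}) : Prop :=
  [/\ injective f,
      (forall s : R, regular s -> exists t : Q, f s * t = 1) &
      (forall q : Q, exists a s : R, regular s /\ q * f s = f a)].

From mathcomp Require Import all_boot all_algebra.
Set Implicit Arguments. Unset Strict Implicit. Unset Printing Implicit Defensive.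
Import GRing.Theory.
Local Open Scope ring_scope.

(* An element q = a/s of q(R) is a unit multiple of the image of a, so
   complements of a in R give complements of q in q(R).  Conversely, a
   complement q = c/s of a in q(R) gives a * c = 0 with a * s + c regular
   in R, and this already forces a + c to be regular. *)

Section RegularElements.
Variable R : comPzRingType.
Implicit Types a b s u : R.

Lemma regularM a b : regular a -> regular b -> regular (a * b).
Proof. by move=> ra rb x; rewrite -mulrA => /ra/rb. Qed.

Lemma regular_mul_eq1 a b : a * b = 1 -> regular b.
Proof. by move=> ab1 x bx0; rewrite -[x]mul1r -ab1 -mulrA bx0 mulr0. Qed.

Lemma nilradicalM a b : in_nilradical a -> in_nilradical (a * b).
Proof. by move=> [n an0]; exists n; rewrite exprMn an0 mul0r. Qed.

Lemma complementedMr a u : regular u -> complemented a -> complemented (a * u).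
Proof.
move=> ru [b [ab0 rab]]; exists (b * u); split.
  by rewrite mulrACA ab0 mul0r.
by rewrite -mulrDl; apply: regularM.
Qed.

Lemma regularD_orth a b s : a * b = 0 -> regular (a * s + b) -> regular (a + b).
Proof.
move=> ab0 rasb x abx0.
have a2x0 : a * (a * x) = 0.
  move: (congr1 (GRing.mul a) abx0).
  by rewrite mulrDl mulrDr [a * (b * x)]mulrA ab0 mul0r addr0 mulr0.
have ax0 : a * x = 0.
  apply: rasb; rewrite mulrDl mulrAC a2x0 mul0r add0r.
  by rewrite mulrA [b * a]mulrC ab0 mul0r.
have bx0 : b * x = 0 by move: abx0; rewrite mulrDl ax0 add0r.
by apply: rasb; rewrite mulrDl mulrAC ax0 mul0r add0r.
Qed.

End RegularElements.

Section InjectiveMorphism.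
Variables (R S : comPzRingType) (f : {rmorphism R -> S}).
Hypothesis f_inj : injective f.

Lemma rmorph_eq0_inj a : f a = 0 -> a = 0.
Proof. by move=> fa0; apply: f_inj; rewrite fa0 rmorph0. Qed.

Lemma nilradical_rmorph a : in_nilradical (f a) <-> in_nilradical a.
Proof.
split=> -[n an0]; exists n; first by apply: rmorph_eq0_inj; rewrite rmorphXn.
by rewrite -rmorphXn an0 rmorph0.
Qed.

Lemma regular_rmorphW a : regular (f a) -> regular a.
Proof. by move=> rfa b ab0; apply/rmorph_eq0_inj/rfa; rewrite -rmorphM ab0 rmorph0. Qed.

End InjectiveMorphism.

Section ClassicalQuotient.
Variables (R Q : comPzRingType) (f : {rmorphism R -> Q}).
Hypothesis qf : is_classical_quotient f.

Lemma regular_rmorph a : regular a -> regular (f a).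
Proof.
have [f_inj f_unit f_frac] := qf.
move=> ra q faq0; have [c [s [rs qs]]] := f_frac q.
have [t st1] := f_unit s rs.
have c0 : c = 0.
  by apply/ra/(rmorph_eq0_inj f_inj); rewrite rmorphM -qs mulrA faq0 mul0r.
by rewrite -[q]mulr1 -st1 mulrA qs c0 rmorph0 mul0r.
Qed.

Lemma semi_complemented_quotient : semi_complemented R -> semi_complemented Q.
Proof.
have [f_inj f_unit f_frac] := qf.
move=> scR q nq; have [a [s [rs qs]]] := f_frac q.
have [t st1] := f_unit s rs.
have -> : q = f a * t by rewrite -qs -mulrA st1 mulr1.
apply: complementedMr; first exact: regular_mul_eq1 st1.
have [b [ab0 rab]] : complemented a.
  apply: scR => /(nilradical_rmorph f_inj)/(nilradicalM t).
  by rewrite -qs -mulrA st1 mulr1.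
by exists (f b); rewrite -rmorphM -rmorphD ab0 rmorph0; split=> //; apply: regular_rmorph.
Qed.

Lemma semi_complemented_of_quotient : semi_complemented Q -> semi_complemented R.
Proof.
have [f_inj _ f_frac] := qf.
move=> scQ a na.
have [q [faq0 rfaq]] : complemented (f a) by apply/scQ => /(nilradical_rmorph f_inj).
have [c [s [rs qs]]] := f_frac q.
have ac0 : a * c = 0.
  by apply: (rmorph_eq0_inj f_inj); rewrite rmorphM -qs mulrA faq0 mul0r.
exists c; split=> //; apply: (regularD_orth (s := s)) => //.
apply: (regular_rmorphW f_inj).
by rewrite rmorphD rmorphM -qs -mulrDl; apply: regularM => //; apply: regular_rmorph.
Qed.

End ClassicalQuotient.

Theorem mainTheorem5 (R Q : comPzRingType) (f : {rmorphism R -> Q}) :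
  is_classical_quotient f -> (semi_complemented R <-> semi_complemented Q).
Proof.
move=> qf; split; [exact: semi_complemented_quotient qf | exact: semi_complemented_of_quotient qf].
Qed.
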